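(* Let $G\in\Gamma_0(\mathbb{R}^n)$ be partly smooth at $x^\star$ relative to an affine or linear manifold $\mathcal{M}_G$ (so $\mathcal{M}_G = x^\star + T$ with $T\eqdef T^G_{x^\star}$), and let $\widetilde{G}$ be a $C^2$ smooth representative of $G$ on $\mathcal{M}_G$ near $x^\star$. For $h\in\mathbb{R}^n$ let $x^\star_h \eqdef x^\star + P_{T} h$. Then, as $h\to 0$, \[ e_G^{x^\star_h} = e_G^{x^\star} + P_{T}\nabla^2\widetilde{G}(x^\star) P_{T} h + o(h), \] and moreover, for every $h\in\mathbb{R}^n$, \[ \big\langle P_{T}\nabla^2\widetilde{G}(x^\star)P_{T} h,\, h\big\rangle \geq 0 . \]
   Context: $\Gamma_0(\mathbb{R}^n)$: proper lsc convex functions. For $x$ with $\partial G(x)\neq\emptyset$, $T^G_x\eqdef \mathrm{Lin}(\partial G(x))^\perp$ ($\mathrm{Lin}(C)$ the subspace parallel to the affine hull of $C$) and $e_G^x \eqdef P_{T^G_x}(\partial G(x))$ (a singleton). $G$ is partly smooth at $x$ relative to $\mathcal{M}\ni x$ if $\mathcal{M}$ is a $C^2$-manifold around $x$ with $G|_{\mathcal{M}}$ $C^2$ near $x$, the tangent space of $\mathcal{M}$ at $x$ is $T^G_x$, and $\partial G$ is continuous at $x$ relative to $\mathcal{M}$. A $C^2$ smooth representative $\widetilde G$ is a $C^2$ function on a neighbourhood of $x^\star$ agreeing with $G$ on $\mathcal{M}_G$; $\nabla^2\widetilde G$ is its Euclidean Hessian. $P_T$ is the orthogonal projector onto $T$.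 *)

From HB Require Import structures.
From mathcomp Require Import all_boot all_order all_algebra.
From mathcomp Require Import all_classical all_reals all_analysis.
Set Implicit Arguments. Unset Strict Implicit. Unset Printing Implicit Defensive.
Import Order.TTheory GRing.Theory Num.Theory.
Import numFieldNormedType.Exports.
Local Open Scope classical_set_scope.
Local Open Scope ring_scope.

Section Defs.
Variables (R : realType) (n : nat).
Local Notation V := 'cV[R]_n.

Definition dot (u v : V) : R := \sum_(i < n) u i 0 * v i 0.

Definition ebasis (i : 'I_n) : V := delta_mx i 0.

Definition pder (f : V -> R) (i : 'I_n) : V -> R :=
  fun x => 'D_(ebasis i) f x.

Definition C2_on (U : set V) (f : V -> R) : Prop :=
  open U /\
  forall x, U x ->
    {for x, continuous f} /\
    (forall i, derivable f x (ebasis i) /\ {for x, continuous (pder f i)}) /\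
    (forall i j, derivable (pder f i) x (ebasis j) /\
                 {for x, continuous (pder (pder f i) j)}).

Definition hessian (f : V -> R) (x : V) : 'M[R]_n :=
  \matrix_(i, j) pder (pder f i) j x.

Definition convex_ext (G : V -> \bar R) : Prop :=
  forall (x y : V) (t : R), 0 <= t <= 1 ->
    (G (t *: x + (1 - t) *: y)%R <= t%:E * G x + (1 - t)%:E * G y)%E.

Definition proper_ext (G : V -> \bar R) : Prop :=
  (forall x, G x != -oo%E) /\ (exists x, G x \is a fin_num).

Definition Gamma0 (G : V -> \bar R) : Prop :=
  proper_ext G /\ lower_semicontinuous G /\ convex_ext G.

Definition subdiff (G : V -> \bar R) (x : V) (u : V) : Prop :=
  G x \is a fin_num /\
  forall y, (G x + (dot u (y - x)%R)%:E <= G y)%E.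

(* T^G_x = Lin(dG(x))^perp, where Lin(dG(x)) is spanned by the differences
   u1 - u2 of subgradients *)
Definition Tsp (G : V -> \bar R) (x : V) : set V :=
  [set v | forall u1 u2, subdiff G x u1 -> subdiff G x u2 -> dot (u1 - u2) v = 0].

Definition is_orth_proj (S : set V) (P : 'M[R]_n) : Prop :=
  P^T = P /\ P *m P = P /\ (forall v, S v <-> P *m v = v).

(* e_G^x = P_{T^G_x}(dG(x)) (the singleton's element; arbitrary (0) when
   dG(x) is empty, where it is undefined in the paper) *)
Definition eG (G : V -> \bar R) (x : V) : V :=
  xget 0 [set e | exists P u, is_orth_proj (Tsp G x) P /\ subdiff G x u /\ e = P *m u].

Definition subdiff_continuous_rel (G : V -> \bar R) (x : V) (M : set V) : Prop :=
  (forall u, subdiff G x u -> forall eps : R, 0 < eps ->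
     \forall y \near x, M y -> exists u', subdiff G y u' /\ `|u' - u| < eps) /\
  (forall (xk uk : nat -> V) (u : V),
     (forall k, M (xk k) /\ subdiff G (xk k) (uk k)) ->
     xk @ \oo --> x -> uk @ \oo --> u -> subdiff G x u).

Definition C2_representative (G : V -> \bar R) (Gt : V -> R) (x : V) (M : set V) : Prop :=
  exists U : set V, U x /\ C2_on U Gt /\ (forall y, U y -> M y -> G y = (Gt y)%:E).

Definition affine_manifold_of (G : V -> \bar R) (x : V) (M : set V) : Prop :=
  M = [set y | Tsp G x (y - x)].

(* An affine M is a C^2 manifold whose tangent space is its direction, so
   requiring M = x + T^G_x encodes both "M is a C^2 manifold around x" and
   "the tangent space of M at x is T^G_x". *)
Definition partly_smooth_affine (G : V -> \bar R) (x : V) (M : set V) : Prop :=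
  (exists u, subdiff G x u) /\
  affine_manifold_of G x M /\
  (exists Gt, C2_representative G Gt x M) /\
  subdiff_continuous_rel G x M.

End Defs.

From HB Require Import structures.
From mathcomp Require Import all_boot all_order all_algebra.
From mathcomp Require Import all_classical all_reals all_analysis.
From mathcomp Require Import ring lra.
Set Implicit Arguments. Unset Strict Implicit.
Import Order.TTheory GRing.Theory Num.Theory.
Import numFieldNormedType.Exports.
Local Open Scope classical_set_scope.
Local Open Scope ring_scope.

(* On the affine manifold [M] near [xs], [G] coincides with the smooth [Gt],
   so every subgradient [u] of [G] at [y] in [M] satisfies
   [P u = P (grad Gt y)] (compare the subgradient inequality with the
   first-order expansion of [Gt] along the directions of [T]); inner
   semicontinuity of the subdifferential forces [T^G_y = T] for such [y] close
   to [xs].  Hence [eG G (xs + P h) = P (grad Gt (xs + P h))], and the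
   expansion follows from the differentiability of [grad Gt] at [xs].
   Monotonicity of the subdifferential gives
   [0 <= <eG G (xs + P h) - eG G xs, h>]; applying this to [t h] and letting
   [t] tend to [0] turns it into positive semidefiniteness of [P (hessian Gt xs) P]. *)

Section MatrixNorm.
Variable R : realType.

Lemma mx_norm_entry_le p q (A : 'M[R]_(p, q)) i j : `|A i j| <= `|A|.
Proof.
rewrite [leRHS]/Num.Def.normr/= mx_normrE.
by apply/bigmax_geP; right; exists (i, j).
Qed.

Lemma mx_norm_le_entries p q (A : 'M[R]_(p, q)) c :
  0 <= c -> (forall i j, `|A i j| <= c) -> `|A| <= c.
Proof.
move=> c0 Ac; rewrite [leLHS]/Num.Def.normr/= mx_normrE.
by apply: bigmax_le => // -[i j] _; apply: Ac.
Qed.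

Lemma norm_mulmx_le p q (A : 'M[R]_(p, q)) (v : 'cV[R]_q) :
  `|A *m v| <= q%:R * `|A| * `|v|.
Proof.
apply: mx_norm_le_entries => [|i j]; first by rewrite !mulr_ge0.
rewrite (ord1 j) mxE; apply: le_trans (ler_norm_sum _ _ _) _.
apply: le_trans (_ : \sum_(k < q) `|A| * `|v| <= _).
  by apply: ler_sum => k _; rewrite normrM ler_pM ?mx_norm_entry_le.
by rewrite sumr_const card_ord -mulrA mulr_natl.
Qed.

End MatrixNorm.

Section Dot.
Variables (R : realType) (n : nat).
Local Notation V := 'cV[R]_n.

Lemma dotE (u v : V) : dot u v = (u^T *m v) 0 0.
Proof. by rewrite /dot mxE; apply: eq_bigr => i _; rewrite mxE. Qed.

Lemma dotC (u v : V) : dot u v = dot v u.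
Proof. by rewrite /dot; apply: eq_bigr => i _; rewrite mulrC. Qed.

Lemma dotDl (u w v : V) : dot (u + w) v = dot u v + dot w v.
Proof. by rewrite /dot -big_split; apply: eq_bigr => i _; rewrite mxE mulrDl. Qed.

Lemma dotZl (a : R) (u v : V) : dot (a *: u) v = a * dot u v.
Proof. by rewrite /dot mulr_sumr; apply: eq_bigr => i _; rewrite mxE mulrA. Qed.

Lemma dotNl (u v : V) : dot (- u) v = - dot u v.
Proof. by rewrite -scaleN1r dotZl mulN1r. Qed.

Lemma dotBl (u w v : V) : dot (u - w) v = dot u v - dot w v.
Proof. by rewrite dotDl dotNl. Qed.

Lemma dotDr (u w v : V) : dot v (u + w) = dot v u + dot v w.
Proof. by rewrite !(dotC v) dotDl. Qed.

Lemma dotZr (a : R) (u v : V) : dot v (a *: u) = a * dot v u.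
Proof. by rewrite !(dotC v) dotZl. Qed.

Lemma dot0r (u : V) : dot u 0 = 0.
Proof. by rewrite -(scale0r (0 : V)) dotZr mul0r. Qed.

Lemma dot_mulmxr (A : 'M[R]_n) (u v : V) : dot u (A *m v) = dot (A^T *m u) v.
Proof. by rewrite !dotE trmx_mul trmxK mulmxA. Qed.

Lemma dot_ebasis (u : V) i : dot u (ebasis R i) = u i 0.
Proof.
rewrite /dot (bigD1 i) //= big1 ?addr0; first by rewrite mxE !eqxx mulr1.
by move=> j ji; rewrite mxE (negbTE ji) mulr0.
Qed.

Lemma dot_nondeg (u : V) : (forall w, dot u w = 0) -> u = 0.
Proof. by move=> u0; apply/matrixP => i j; rewrite (ord1 j) mxE -dot_ebasis u0. Qed.

Lemma norm_dot_le (u v : V) : `|dot u v| <= n%:R * `|u| * `|v|.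
Proof.
rewrite /dot; apply: le_trans (ler_norm_sum _ _ _) _.
apply: le_trans (_ : \sum_(i < n) `|u| * `|v| <= _).
  by apply: ler_sum => i _; rewrite normrM ler_pM ?mx_norm_entry_le.
by rewrite sumr_const card_ord -mulrA mulr_natl.
Qed.

Lemma mulmx_row_dot k (D : 'M[R]_(k, n)) (z : 'cV[R]_n) j :
  (D *m z) j 0 = dot (row j D)^T z.
Proof. by rewrite mxE /dot; apply: eq_bigr => i _; rewrite !mxE. Qed.

End Dot.

Section OrthProj.
Variables (R : realType) (n : nat).
Local Notation V := 'cV[R]_n.
Implicit Types (S : set V) (P : 'M[R]_n).

Lemma mulmx_cVP (A B : 'M[R]_n) : (forall v : V, A *m v = B *m v) -> A = B.
Proof.
move=> AB; apply/trmx_inj/eqP/mulmxP => u.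
by rewrite -[u]trmxK -!trmx_mul AB.
Qed.

Lemma orth_proj_mem S P v : is_orth_proj S P -> S (P *m v).
Proof. by case=> _ [PP SP]; apply/SP; rewrite mulmxA PP. Qed.

Lemma orth_proj_id S P v : is_orth_proj S P -> S v -> P *m v = v.
Proof. by case=> _ [_ SP] /SP. Qed.

Lemma orth_proj_dotC S P u v : is_orth_proj S P -> dot (P *m u) v = dot u (P *m v).
Proof. by case=> PT _; rewrite dot_mulmxr PT. Qed.

Lemma orth_proj_unique S P P' : is_orth_proj S P -> is_orth_proj S P' -> P' = P.
Proof.
move=> hP hP'.
have PP' : P *m P' = P'.
  by apply: mulmx_cVP => v; rewrite -mulmxA (orth_proj_id hP) //; apply: orth_proj_mem hP'.
have P'P : P' *m P = P.
  by apply: mulmx_cVP => v; rewrite -mulmxA (orth_proj_id hP') //; apply: orth_proj_mem hP.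
case: hP => PT _; case: hP' => P'T _.
by rewrite -P'T -PP' trmx_mul PT P'T P'P.
Qed.

Lemma orth_proj_eq S S' P : S = S' -> is_orth_proj S P -> is_orth_proj S' P.
Proof. by move->. Qed.

End OrthProj.

Section Subdifferential.
Variables (R : realType) (n : nat).
Local Notation V := 'cV[R]_n.
Implicit Types (G : V -> \bar R) (P : 'M[R]_n).

Lemma Tsp0 G x : Tsp G x 0.
Proof. by move=> u1 u2 _ _; rewrite dot0r. Qed.

Lemma TspD G x v w : Tsp G x v -> Tsp G x w -> Tsp G x (v + w).
Proof. by move=> Tv Tw u1 u2 h1 h2; rewrite dotDr Tv // Tw // addr0. Qed.

Lemma TspZ G x a v : Tsp G x v -> Tsp G x (a *: v).
Proof. by move=> Tv u1 u2 h1 h2; rewrite dotZr Tv // mulr0. Qed.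

Lemma TspB G x v w : Tsp G x v -> Tsp G x w -> Tsp G x (v - w).
Proof. by move=> Tv Tw; rewrite -scaleN1r; apply/TspD/TspZ. Qed.

Lemma eG_subdiff G x P u : is_orth_proj (Tsp G x) P -> subdiff G x u ->
  eG G x = P *m u.
Proof.
move=> hP hu; apply: xget_unique; first by exists P, u.
move=> _ [P' [u' [hP' [hu' ->]]]]; rewrite (orth_proj_unique hP hP').
apply/eqP; rewrite -subr_eq0 -mulmxBr; apply/eqP/dot_nondeg => w.
by rewrite (orth_proj_dotC _ _ hP); apply: (orth_proj_mem _ hP).
Qed.

Lemma dot_Tsp_approx G y (u1 u2 w1 w2 z : V) :
  subdiff G y w1 -> subdiff G y w2 -> Tsp G y z ->
  `|dot (u1 - u2) z| <= n%:R * (`|u1 - w1| + `|u2 - w2|) * `|z|.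
Proof.
move=> w1y w2y Tz.
have -> : u1 - u2 = (u1 - w1) - (u2 - w2) + (w1 - w2).
  by apply/matrixP => a b; rewrite !mxE; ring.
rewrite dotDl (Tz w1 w2) // addr0; apply: le_trans (norm_dot_le _ _) _.
by rewrite ler_wpM2r // ler_wpM2l // ler_normB.
Qed.

Lemma subdiff_monotone G x y u v :
  subdiff G x u -> subdiff G y v -> 0 <= dot (v - u) (y - x).
Proof.
move=> [Gx ux] [Gy vy]; have := ux y; have := vy x.
rewrite -(fineK Gx) -(fineK Gy) -!EFinD !lee_fin.
rewrite dotBl -opprB dotC dotNl (dotC (y - x)); lra.
Qed.

End Subdifferential.

Lemma MVT_origin (R : realType) (phi dphi : R -> R) (c : R) :
  (forall s, `|s| <= `|c| -> is_derive s (1 : R) phi (dphi s)) ->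
  exists2 xi, `|xi| <= `|c| & phi c - phi 0 = dphi xi * c.
Proof.
move=> dphiP.
have cont a b : `|a| <= `|c| -> `|b| <= `|c| -> {within `[a, b], continuous phi}.
  move=> ac bc; apply: derivable_within_continuous => s.
  rewrite in_itv /= => /andP[aS sB].
  have : `|s| <= `|c|.
    move: ac bc; rewrite !ler_norml => /andP[ac _] /andP[_ bc].
    by rewrite (le_trans ac aS) (le_trans sB bc).
  by move/dphiP => [].
have [c0|c0] := leP 0 c.
- have dphi0c s : s \in `]0, c[ -> is_derive s (1 : R) phi (dphi s).
    rewrite in_itv /= => /andP[s0 sc]; apply: dphiP.
    by rewrite !gtr0_norm ?ltW // (lt_trans s0 sc).
  have c0c : {within `[0, c], continuous phi} by apply: cont; rewrite ?normr0.
  have [xi + ->] := MVT_segment c0 dphi0c c0c.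
  by rewrite in_itv /= subr0 => /andP[xi0 xic]; exists xi; rewrite ?ger0_norm.
- have dphic0 s : s \in `]c, 0[ -> is_derive s (1 : R) phi (dphi s).
    rewrite in_itv /= => /andP[cs s0]; apply: dphiP.
    by rewrite (ltr0_norm s0) (ltr0_norm c0) lerN2 ltW.
  have cc0 : {within `[c, 0], continuous phi} by apply: cont; rewrite ?normr0.
  have [xi + E] := MVT_segment (ltW c0) dphic0 cc0.
  rewrite in_itv /= => /andP[cxi xi0]; exists xi.
    by rewrite !ler0_norm ?lerN2 // ltW.
  by rewrite -opprB E sub0r mulrN opprK.
Qed.

Section Differentiability.
Variables (R : realType) (n : nat).
Local Notation V := 'cV[R]_n.

Definition little_o0 (W : normedModType R) (r : V -> W) : Prop :=
  forall eps : R, 0 < eps -> \forall h \near (0 : V), `|r h| <= eps * `|h|.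

Definition grad (f : V -> R) (x : V) : V := \col_i pder f i x.

Lemma is_derive_line (f : V -> R) (a v : V) (t : R) :
  derivable f (a + t *: v) v ->
  is_derive t (1 : R) (fun s => f (a + s *: v)) ('D_v f (a + t *: v)).
Proof.
move=> fv.
have E : (fun h : R => h^-1 *: (((fun s => f (a + s *: v)) \o shift t) (h *: (1 : R))
                                 - f (a + t *: v)))
   = (fun h : R => h^-1 *: ((f \o shift (a + t *: v)) (h *: v) - f (a + t *: v))).
  apply/funext => h /=; congr (_ *: (f _ - _)).
  by rewrite [h *: 1]mulr1 scalerDl addrCA addrA.
by split; rewrite /derivable /derive E.
Qed.

Definition col_trunc (k : nat) (d : V) : V := \col_i (if (i < k)%N then d i 0 else 0).

Lemma col_trunc0 d : col_trunc 0 d = 0.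
Proof. by apply/matrixP => i j; rewrite !mxE. Qed.

Lemma col_truncn d : col_trunc n d = d.
Proof. by apply/matrixP => i j; rewrite !mxE ltn_ord (ord1 j). Qed.

Lemma col_truncS (k : 'I_n) d : col_trunc k.+1 d = col_trunc k d + d k 0 *: ebasis R k.
Proof.
apply/matrixP => i j; rewrite /ebasis !mxE (ord1 j) eqxx andbT ltnS leq_eqVlt.
case: (eqVneq i k) => [->|ik]; first by rewrite eqxx ltnn mulr1 add0r.
by rewrite (_ : (i == k :> nat) = false) ?mulr0 ?addr0 //; apply/negbTE.
Qed.

Lemma norm_col_trunc_line (i : 'I_n) (d : V) (s : R) :
  `|s| <= `|d i 0| -> `|col_trunc i d + s *: ebasis R i| <= `|d|.
Proof.
move=> sd; apply: mx_norm_le_entries => // a b.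
rewrite /ebasis !mxE (ord1 b) eqxx andbT.
case: (eqVneq a i) => [->|ai].
  by rewrite ltnn mulr1 add0r (le_trans sd) // mx_norm_entry_le.
rewrite mulr0 addr0; case: ifP => _; first exact: mx_norm_entry_le.
by rewrite normr0.
Qed.

Lemma dot_grad (f : V -> R) (x d : V) : dot (grad f x) d = \sum_i pder f i x * d i 0.
Proof. by apply: eq_bigr => i _; rewrite mxE. Qed.

(* Change one coordinate at a time and apply the mean value theorem. *)
Lemma grad_expansion (f : V -> R) (x : V) (r : R) : 0 < r ->
  (forall y, `|x - y| < r -> forall i, derivable f y (ebasis R i)) ->
  (forall i, {for x, continuous (pder f i)}) ->
  little_o0 (fun d => f (x + d) - f x - dot (grad f x) d).
Proof.
move=> r0 fder fcont eps e0.
pose e' := eps / (n.+1)%:R.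
have e'0 : 0 < e' by rewrite divr_gt0.
have : \forall y \near x, forall i, `|pder f i x - pder f i y| < e'.
  apply: (@filter_forall _ _ (fun i y => `|pder f i x - pder f i y| < e') (nbhs x)) => i.
  by have := fcont i; move/cvgr_dist_lt => /(_ _ e'0).
move/nbhs_normP => [d0 /= d00 Hd0].
apply/nbhs_norm0P; exists (Num.min d0 r) => /=; first by rewrite lt_min d00 r0.
move=> d /=; rewrite lt_min => /andP[dd0 dr].
pose g k := f (x + col_trunc k d).
have := telescope_sumr g (leq0n n).
rewrite big_mkord /g col_truncn col_trunc0 addr0 dot_grad => <-.
rewrite -sumrB; apply: le_trans (ler_norm_sum _ _ _) _.
apply: le_trans (_ : \sum_(k < n) e' * `|d| <= _).
  apply: ler_sum => k _; rewrite col_truncS.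
  pose a := x + col_trunc k d.
  have near_x s : `|s| <= `|d k 0| -> `|x - (a + s *: ebasis R k)| <= `|d|.
    move=> sd; rewrite /a -addrA opprD addrA subrr sub0r normrN.
    exact: norm_col_trunc_line.
  have [xi xid E] := @MVT_origin R (fun s => f (a + s *: ebasis R k))
    (fun s => pder f k (a + s *: ebasis R k)) (d k 0)
    (fun s sd => is_derive_line (fder _ (le_lt_trans (near_x s sd) dr) k)).
  rewrite addrA -/a (_ : f a = f (a + 0 *: ebasis R k)); last by rewrite scale0r addr0.
  rewrite E -mulrBl normrM ler_pM ?mx_norm_entry_le //.
  by rewrite distrC ltW //; apply: Hd0; apply: le_lt_trans (near_x _ xid) dd0.
rewrite sumr_const card_ord -mulr_natl mulrA ler_wpM2r // /e' mulrCA ger_pMr //.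
by rewrite ler_pdivrMr ?ltr0n // mul1r ler_nat.
Qed.

End Differentiability.

Section LittleO.
Variables (R : realType) (n : nat).
Local Notation V := 'cV[R]_n.

Lemma little_o0_eq_near (W : normedModType R) (r r' : V -> W) :
  (\forall h \near (0 : V), r' h = r h) -> little_o0 r -> little_o0 r'.
Proof. by move=> rr' ro eps e0; apply: filterS2 rr' (ro _ e0) => h ->. Qed.

Lemma little_o0_mulmx m p (A : 'M[R]_(m, p)) (B : 'M[R]_n) (r : V -> 'cV[R]_p) :
  little_o0 r -> little_o0 (fun h => A *m r (B *m h)).
Proof.
move=> ro eps e0.
pose a := p%:R * `|A|; pose b := n%:R * `|B|.
have a0 : 0 <= a by rewrite mulr_ge0.
have b0 : 0 <= b by rewrite mulr_ge0.
have ab1 : 0 < a * b + 1 by rewrite ltr_wpDl ?mulr_ge0.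
have [del /= del0 rdel] := nbhs_norm0P.1 (ro _ (divr_gt0 e0 ab1)).
apply/nbhs_norm0P; exists (del / (b + 1)) => /=; first by rewrite divr_gt0 ?ltr_wpDl.
move=> h /=; rewrite ltr_pdivlMr ?ltr_wpDl // => hdel.
have Bh : `|B *m h| <= b * `|h| by rewrite norm_mulmx_le.
have /rdel /= rBh : `|B *m h| < del.
  apply: le_lt_trans Bh (le_lt_trans _ hdel); have := normr_ge0 h; nra.
apply: le_trans (norm_mulmx_le _ _) _; rewrite -/a.
apply: le_trans (ler_wpM2l a0 rBh) _.
apply: le_trans (_ : a * (eps / (a * b + 1) * (b * `|h|)) <= _).
  by rewrite ler_wpM2l // ler_wpM2l // ltW // divr_gt0.
have q0 : 0 <= eps / (a * b + 1) by rewrite ltW // divr_gt0.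
rewrite -[X in _ <= X * _](mulfVK (lt0r_neq0 ab1)).
move: q0; set q := eps / _; have := normr_ge0 h; nra.
Qed.

Lemma affine_minorant_slope (f : V -> R) (g y v : V) (a r : R) :
  little_o0 (fun d => f (y + d) - f y - dot g d) -> 0 < r ->
  (forall s, `|s| < r -> s * a <= f (y + s *: v) - f y) -> a = dot g v.
Proof.
move=> fo r0 minor.
apply/eqP; rewrite -subr_eq0 -normr_eq0; apply/eqP/le_anti; rewrite normr_ge0 andbT.
apply/ler_addgt0Pr => e e0; rewrite add0r.
have c0 : 0 < `|v| + 1 by rewrite ltr_wpDl.
have [del /= del0 fdel] := nbhs_norm0P.1 (fo _ (divr_gt0 e0 c0)).
pose t := Num.min r (del / (`|v| + 1)) / 2.
have t0 : 0 < t by rewrite divr_gt0 // lt_min r0 divr_gt0.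
have [tr tdel] : t < r /\ t * (`|v| + 1) < del.
  have : Num.min r (del / (`|v| + 1)) <= r /\ Num.min r (del / (`|v| + 1)) <= del / (`|v| + 1).
    by split; rewrite ge_min lexx ?orbT.
  by rewrite /t ler_pdivlMr // => -[]; lra.
have slope s : `|s| = t -> s * (a - dot g v) <= e * t.
  move=> st; have /minor : `|s| < r by rewrite st.
  have /fdel : `|s *: v| < del.
    by rewrite normrZ st (le_lt_trans _ tdel) // ler_wpM2l ?lerDl // ltW.
  rewrite /= dotZr normrZ st ler_norml => /andP[_ upper] lower.
  have : e / (`|v| + 1) * `|v| <= e.
    by rewrite mulrAC ler_pdivrMr // ler_wpM2l ?lerDl // ltW.
  nra.
have := slope t (gtr0_norm t0); have := slope (- t); rewrite normrN gtr0_norm // => /(_ erefl).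
rewrite ler_norml; nra.
Qed.

Lemma monotone_little_o_psd (F : V -> V) (A : 'M[R]_n) :
  little_o0 (fun h => F h - A *m h) ->
  (\forall h \near (0 : V), 0 <= dot (F h) h) ->
  forall h, 0 <= dot (A *m h) h.
Proof.
move=> Fo Fmono h; apply/ler_addgt0Pr => e e0.
pose c := n%:R * `|h| * `|h| + 1.
have c0 : 0 < c by rewrite ltr_wpDl // !mulr_ge0.
have [d1 /= d10 Fd1] := nbhs_norm0P.1 (Fo _ (divr_gt0 e0 c0)).
have [d2 /= d20 Fd2] := nbhs_norm0P.1 Fmono.
pose t := Num.min d1 d2 / (`|h| + 1).
have t0 : 0 < t by rewrite divr_gt0 ?ltr_wpDl // lt_min d10 d20.
have [th1 th2] : `|t *: h| < d1 /\ `|t *: h| < d2.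
  have : `|t *: h| < Num.min d1 d2.
    rewrite normrZ gtr0_norm // /t mulrAC ltr_pdivrMr ?ltr_wpDl //.
    by rewrite ltr_pM2l ?ltrDl // lt_min d10 d20.
  by rewrite lt_min => /andP[].
have /= := Fd2 _ th2; have /= := Fd1 _ th1.
set r := F (t *: h) - A *m (t *: h) => rsmall.
have -> : F (t *: h) = r + t *: (A *m h) by rewrite /r scalemxAr subrK.
rewrite dotZr dotDl dotZl.
have : `|dot r h| <= t * e.
  apply: le_trans (norm_dot_le _ _) _.
  apply: le_trans (_ : n%:R * (e / c * (t * `|h|)) * `|h| <= _).
    by rewrite ler_wpM2r // ler_wpM2l // -(gtr0_norm t0) -normrZ.
  rewrite (_ : _ * _ * `|h| = t * (e / c * (n%:R * `|h| * `|h|))); last by ring.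
  rewrite ler_wpM2l ?(ltW t0) // mulrAC ler_pdivrMr // ler_wpM2l ?(ltW e0) //.
  by rewrite lerDl.
rewrite ler_norml => /andP[_ upper].
rewrite pmulr_rge0 // => mono.
by rewrite -(pmulr_rge0 _ t0); nra.
Qed.

Lemma nbhs0_shift_mulmx (x : V) (A : 'M[R]_n) (Q : set V) :
  (\forall y \near x, Q y) -> \forall h \near (0 : V), Q (x + A *m h).
Proof.
move/nbhs_normP => [r /= r0 rQ].
have c0 : 0 < n%:R * `|A| + 1 by rewrite ltr_wpDl ?mulr_ge0.
apply/nbhs_norm0P; exists (r / (n%:R * `|A| + 1)) => /=; first by rewrite divr_gt0.
move=> h /=; rewrite ltr_pdivlMr // => hr; apply: rQ => /=.
rewrite opprD addrA subrr sub0r normrN; apply: le_lt_trans (norm_mulmx_le _ _) _.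
by apply: le_lt_trans hr; have := normr_ge0 h; nra.
Qed.

End LittleO.

Section C2.
Variables (R : realType) (n : nat).
Local Notation V := 'cV[R]_n.
Variables (U : set V) (f : V -> R).
Hypothesis fC2 : C2_on U f.

Lemma C2_on_ball x : U x -> exists2 r : R, 0 < r & forall y, `|x - y| < r -> U y.
Proof. by case: fC2 => oU _ /oU/nbhs_normP[r /= r0 rU]; exists r. Qed.

Lemma C2_on_grad_expansion x : U x ->
  little_o0 (fun d => f (x + d) - f x - dot (grad f x) d).
Proof.
move=> Ux; have [r r0 rU] := C2_on_ball Ux.
apply: (grad_expansion r0) => [y /rU Uy i|i].
  by have [_ [/(_ i) []]] := fC2.2 _ Uy.
by have [_ [/(_ i) []]] := fC2.2 _ Ux.
Qed.

Lemma C2_on_hessian_expansion x : U x ->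
  little_o0 (fun d => grad f (x + d) - grad f x - hessian f x *m d).
Proof.
move=> Ux; have [r r0 rU] := C2_on_ball Ux.
have pder_expansion i : little_o0 (fun d =>
    pder f i (x + d) - pder f i x - dot (grad (pder f i) x) d).
  apply: (grad_expansion r0) => [y /rU Uy j|j].
    by have [_ [_ /(_ i j) []]] := fC2.2 _ Uy.
  by have [_ [_ /(_ i j) []]] := fC2.2 _ Ux.
move=> eps e0.
have : \forall d \near (0 : V), forall i,
    `|pder f i (x + d) - pder f i x - dot (grad (pder f i) x) d| <= eps * `|d|.
  apply: (@filter_forall _ _ (fun i d =>
    `|pder f i (x + d) - pder f i x - dot (grad (pder f i) x) d| <= eps * `|d|)
    (nbhs (0 : V))) => i.
  exact: pder_expansion.
apply: filterS => d entries; apply: mx_norm_le_entries => [|i j].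
  by rewrite mulr_ge0 // ltW.
rewrite (ord1 j) !mxE; under eq_bigr do rewrite mxE.
by rewrite -dot_grad.
Qed.

End C2.

Section RowSpan.
Variables (R : realType) (n : nat).
Local Notation V := 'cV[R]_n.

(* Adding a vector outside the row space raises the rank, which is at most [n]. *)
Lemma exists_spanning_rows (X : set V) : exists k (D : 'M[R]_(k, n)),
  (forall j, X (row j D)^T) /\ (forall d, X d -> (d^T <= D)%MS).
Proof.
apply: contrapT => nospan.
have grow k (D : 'M[R]_(k, n)) : (forall j, X (row j D)^T) ->
    exists2 d, X d & ~~ (d^T <= D)%MS.
  move=> DX; apply: contrapT => nd; apply: nospan; exists k, D; split => // d Xd.
  by apply: contrapT => /negP dD; apply: nd; exists d.
have rank_ge r : exists k (D : 'M[R]_(k, n)), (forall j, X (row j D)^T) /\ (r <= \rank D)%N.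
  elim: r => [|r [k [D [DX rD]]]]; first by exists 0%N, 0; split => // -[].
  have [d Xd dD] := grow k D DX.
  exists (k + 1)%N, (col_mx D d^T); split.
    move=> j; case: (split_ordP j) => j' ->; first by rewrite rowKu.
    by rewrite rowKd (ord1 j') (_ : row 0 d^T = d^T) ?trmxK //; apply/rowP => a; rewrite !mxE.
  apply: leq_ltn_trans rD _.
  rewrite (ltn_leqif (mxrank_leqif_sup _)) ?col_mx_sub ?submx_refl //=.
  by have := submx_refl (col_mx D d^T); rewrite col_mx_sub => /andP[].
have [k [D [_ rD]]] := rank_ge n.+1.
by have := rank_leq_col D; rewrite leqNgt rD.
Qed.

Lemma orth_proj_compl_factor k (X : set V) (D : 'M[R]_(k, n)) (S : set V) (P : 'M[R]_n) :
  (forall d, X d -> (d^T <= D)%MS) ->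
  (forall v, (forall d, X d -> dot d v = 0) -> S v) ->
  is_orth_proj S P -> exists A : 'M[R]_(n, k), 1%:M - P = A *m D.
Proof.
move=> DX XS hP; apply/submxP; rewrite submxE.
suff PD : P *m cokermx D = cokermx D by rewrite mulmxBl mul1mx PD subrr.
apply: mulmx_cVP => v; rewrite -mulmxA (orth_proj_id hP) //.
apply: XS => d /DX/submxP[a dE].
by rewrite dotE dE mulmxA -(mulmxA a D) mulmx_coker mulmx0 mul0mx mxE.
Qed.

Lemma eq0_of_small_factor k (A : 'M[R]_(n, k)) (D : 'M[R]_(k, n)) (z : V) (c : R) :
  z = A *m (D *m z) -> `|D *m z| <= c * `|z| -> k%:R * `|A| * c < 1 -> z = 0.
Proof.
move=> zE Dz small; apply/eqP; rewrite -normr_eq0 eq_le normr_ge0 andbT.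
have : `|z| <= k%:R * `|A| * c * `|z|.
  rewrite {1}zE -mulrA; apply: le_trans (norm_mulmx_le _ _) _.
  by rewrite ler_wpM2l ?mulr_ge0.
have := normr_ge0 z; nra.
Qed.

End RowSpan.

Section PartlySmooth.
Variables (R : realType) (n : nat).
Local Notation V := 'cV[R]_n.
Variables (G : V -> \bar R) (xs : V) (M : set V) (Gt : V -> R) (P : 'M[R]_n) (U : set V).
Hypothesis hP : is_orth_proj (Tsp G xs) P.
Hypothesis hM : affine_manifold_of G xs M.
Hypothesis hC2 : C2_on U Gt.
Hypothesis GGt : forall y, U y -> M y -> G y = (Gt y)%:E.

Lemma M_line y v s : M y -> Tsp G xs v -> M (y + s *: v).
Proof. by rewrite hM /= => My Tv; rewrite addrAC; apply/TspD/TspZ. Qed.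

Lemma M_xs : M xs.
Proof. by rewrite hM /= subrr; apply: Tsp0. Qed.

Lemma M_proj h : M (xs + P *m h).
Proof. by rewrite hM /= addrAC subrr add0r; apply: orth_proj_mem hP. Qed.

Lemma subdiff_dot_grad y u v : U y -> M y -> subdiff G y u -> Tsp G xs v ->
  dot u v = dot (grad Gt y) v.
Proof.
move=> Uy My [_ usub] Tv; have [r r0 rU] := C2_on_ball hC2 Uy.
have c0 : 0 < `|v| + 1 by rewrite ltr_wpDl.
apply: (affine_minorant_slope (C2_on_grad_expansion hC2 Uy) (divr_gt0 r0 c0)) => s.
rewrite ltr_pdivlMr // => sr.
have Uys : U (y + s *: v).
  apply: rU; rewrite opprD addrA subrr sub0r normrN normrZ (le_lt_trans _ sr) //.
  by rewrite ler_wpM2l ?lerDl.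
have := usub (y + s *: v).
rewrite (GGt Uy My) (GGt Uys (M_line s My Tv)) addrAC subrr add0r dotZr.
by rewrite -EFinD lee_fin => ?; lra.
Qed.

Lemma Tsp_xs_sub y : U y -> M y -> Tsp G xs `<=` Tsp G y.
Proof.
move=> Uy My v Tv u1 u2 u1y u2y.
by rewrite dotBl !(subdiff_dot_grad Uy My _ Tv) // subrr.
Qed.

Lemma eG_proj_grad y u : U y -> M y -> Tsp G y `<=` Tsp G xs -> subdiff G y u ->
  eG G y = P *m grad Gt y.
Proof.
move=> Uy My Tsub uy.
have hPy : is_orth_proj (Tsp G y) P.
  by apply: orth_proj_eq hP; apply/seteqP; split; [apply: Tsp_xs_sub|].
rewrite (eG_subdiff hPy uy); apply/eqP; rewrite -subr_eq0 -mulmxBr.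
apply/eqP/dot_nondeg => w; rewrite (orth_proj_dotC _ _ hP) dotBl.
by rewrite (subdiff_dot_grad Uy My uy) ?subrr //; apply: orth_proj_mem hP.
Qed.

Lemma compl_proj_subdiff_factor : exists k (D : 'M[R]_(k, n)) (A : 'M[R]_(n, k))
    (uu : 'I_k -> V * V), 1%:M - P = A *m D /\ forall j,
    (subdiff G xs (uu j).1 /\ subdiff G xs (uu j).2) /\ (row j D)^T = (uu j).1 - (uu j).2.
Proof.
pose X d := exists u1 u2, [/\ subdiff G xs u1, subdiff G xs u2 & d = u1 - u2].
have [k [D [DX Dspan]]] := exists_spanning_rows X.
have [A hA] : exists A, 1%:M - P = A *m D.
  apply: (orth_proj_compl_factor Dspan _ hP) => v vX u1 u2 u1x u2x.
  by apply: vX; exists u1, u2.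
have /choice[uu uuP] : forall j, exists p : V * V,
    (subdiff G xs p.1 /\ subdiff G xs p.2) /\ (row j D)^T = p.1 - p.2.
  by move=> j; have [u1 [u2 [? ? ?]]] := DX j; exists (u1, u2).
by exists k, D, A, uu.
Qed.

Hypothesis hinner : forall u, subdiff G xs u -> forall eps : R, 0 < eps ->
  \forall y \near xs, M y -> exists u', subdiff G y u' /\ `|u' - u| < eps.

Lemma near_subdiff_approx k (uu : 'I_k -> V * V) (eps : R) : 0 < eps ->
  (forall j, subdiff G xs (uu j).1 /\ subdiff G xs (uu j).2) ->
  \forall y \near xs, M y -> exists ww : 'I_k -> V * V, forall j,
    [/\ subdiff G y (ww j).1, `|(ww j).1 - (uu j).1| < eps,
        subdiff G y (ww j).2 & `|(ww j).2 - (uu j).2| < eps].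
Proof.
move=> eps0 uux.
pose close j y (w : V * V) := [/\ subdiff G y w.1, `|w.1 - (uu j).1| < eps,
                                 subdiff G y w.2 & `|w.2 - (uu j).2| < eps].
have : \forall y \near xs, forall j, M y -> exists w, close j y w.
  apply: (@filter_forall _ _ (fun j y => M y -> exists w, close j y w) (nbhs xs)) => j.
  have [u1x u2x] := uux j.
  apply: filterS2 (hinner u1x eps0) (hinner u2x eps0) => y near1 near2 My.
  have [w1 [? ?]] := near1 My; have [w2 [? ?]] := near2 My.
  by exists (w1, w2).
apply: filterS => y ynear My.
have /choice[ww wwP] : forall j, exists w, close j y w by move=> j; apply: ynear.
by exists ww.
Qed.

(* Write [1 - P = A D] with the rows of [D] differences of subgradients at [xs],
   and approximate these by differences of subgradients at [y]: for [v] in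
   [T_y], [z := v - P v] lies in [T_y], so [D z] is small compared to [z],
   while [z = A D z]. *)
Lemma Tsp_near_sub : \forall y \near xs, U y -> M y -> Tsp G y `<=` Tsp G xs.
Proof.
have [k [D [A [uu [hA uuP]]]]] := compl_proj_subdiff_factor.
pose K := k%:R * `|A| * n%:R.
have K0 : 0 <= K by rewrite !mulr_ge0.
pose eps := (4 * (K + 1))^-1.
have eps0 : 0 < eps by rewrite invr_gt0 mulr_gt0 // ltr_wpDl.
apply: filterS (near_subdiff_approx eps0 (fun j => (uuP j).1)) => y ynear Uy My v Tyv.
have [ww wwP] := ynear My.
have [PT [PP _]] := hP.
pose z := v - P *m v.
have Tyz : Tsp G y z.
  by apply: TspB => //; apply: Tsp_xs_sub => //; apply: orth_proj_mem hP.
have Dz : `|D *m z| <= n%:R * (2 * eps) * `|z|.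
  apply: mx_norm_le_entries => [|j b]; first by rewrite !mulr_ge0 // ltW.
  rewrite (ord1 b) mulmx_row_dot (uuP j).2.
  have [w1y w1u w2y w2u] := wwP j; apply: le_trans (dot_Tsp_approx _ _ w1y w2y Tyz) _.
  by rewrite ler_wpM2r // ler_wpM2l // mulr2n mulrDl mul1r lerD // distrC ltW.
have zE : z = A *m (D *m z).
  by rewrite mulmxA -hA mulmxBl mul1mx /z mulmxBr mulmxA PP subrr subr0.
have /eqP : z = 0.
  apply: eq0_of_small_factor zE Dz _.
  have epsE : eps * (4 * (K + 1)) = 1 by rewrite mulVf // gt_eqF // mulr_gt0 ?ltr_wpDl.
  rewrite (_ : _ * _ = K * (2 * eps)); last by rewrite /K; ring.
  nra.
by rewrite subr_eq0 => /eqP ->; apply: orth_proj_mem hP.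
Qed.

Variable u0 : V.
Hypothesis hu0 : subdiff G xs u0.
Hypothesis hUxs : U xs.

Lemma eG_xs : eG G xs = P *m grad Gt xs.
Proof. exact: eG_proj_grad hUxs M_xs (fun v Tv => Tv) hu0. Qed.

Lemma near_proj_smooth : \forall h \near (0 : V),
  U (xs + P *m h) /\ exists2 u, subdiff G (xs + P *m h) u &
    eG G (xs + P *m h) = P *m grad Gt (xs + P *m h).
Proof.
have Unear : \forall y \near xs, U y by case: hC2 => oU _; apply: oU.
apply: filterS3 (nbhs0_shift_mulmx P Unear) (nbhs0_shift_mulmx P (hinner hu0 ltr01))
  (nbhs0_shift_mulmx P Tsp_near_sub) => h Uy near_u0 Tsub.
have [u [uy _]] := near_u0 (M_proj h).
split=> //; exists u => //.
by apply: eG_proj_grad uy => //; [exact: M_proj | exact: Tsub Uy (M_proj h)].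
Qed.

Lemma eG_expansion :
  little_o0 (fun h => eG G (xs + P *m h) - eG G xs - P *m hessian Gt xs *m P *m h).
Proof.
apply: little_o0_eq_near (little_o0_mulmx P P (C2_on_hessian_expansion hC2 hUxs)).
apply: filterS near_proj_smooth => h [_ [u _ ->]].
by rewrite eG_xs !mulmxBr !mulmxA.
Qed.

Lemma eG_monotone_near : \forall h \near (0 : V), 0 <= dot (eG G (xs + P *m h) - eG G xs) h.
Proof.
apply: filterS near_proj_smooth => h [Uy [u uy ->]].
have Ph : Tsp G xs (P *m h) by apply: orth_proj_mem hP.
rewrite eG_xs -mulmxBr (orth_proj_dotC _ _ hP) dotBl.
rewrite -(subdiff_dot_grad Uy (M_proj h) uy Ph) -(subdiff_dot_grad hUxs M_xs hu0 Ph) -dotBl.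
by have := subdiff_monotone hu0 uy; rewrite addrAC subrr add0r.
Qed.

End PartlySmooth.

Theorem lemma4p6 (R : realType) (n : nat) (G : 'cV[R]_n -> \bar R)
  (xs : 'cV[R]_n) (M : set 'cV[R]_n) (Gt : 'cV[R]_n -> R) (P : 'M[R]_n) :
  Gamma0 G ->
  partly_smooth_affine G xs M ->
  C2_representative G Gt xs M ->
  is_orth_proj (Tsp G xs) P ->
  (forall eps : R, 0 < eps ->
     \forall h \near (0 : 'cV[R]_n),
       `| eG G (xs + P *m h) - eG G xs - P *m hessian Gt xs *m P *m h | <= eps * `|h|)
  /\
  (forall h : 'cV[R]_n, 0 <= dot (P *m hessian Gt xs *m P *m h) h).
Proof.
move=> _ [[u0 hu0] [hM [_ [hinner _]]]] [U [hUxs [hC2 GGt]]] hP.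
have expansion := eG_expansion hP hM hC2 GGt hinner hu0 hUxs.
split=> //.
exact: monotone_little_o_psd expansion (eG_monotone_near hP hM hC2 GGt hinner hu0 hUxs).
Qed.
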